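(* Let $p\in[2,3)$, $N\in\mathbb N$, $d,n\ge1$, let $f=(f_1,\dots,f_d)$ be vector fields on $\mathbb R^n$ of class $C^2_b$, let $\mathbf w=(\mathbf w_0,\dots,\mathbf w_N)$ be a time series in $\mathbb R^d$, and let $\mathbf x$ solve $\mathbf x_{k+1}=\mathbf x_k+\sum_{\mu=1}^df_\mu(\mathbf x_k)(\mathbf w^\mu_{k+1}-\mathbf w^\mu_k)$, $\mathbf x_0=\xi\in\mathbb R^n$. Define for $0\le k<l\le N$ \[ I_{k,l}\coloneqq\mathbf x_{k,l}-\sum_{\mu=1}^df_\mu(\mathbf x_k)\mathbf w^\mu_{k,l},\qquad J^\mu_{k,l}\coloneqq f_\mu(\mathbf x_l)-f_\mu(\mathbf x_k)-\sum_{\nu=1}^dDf_\mu(\mathbf x_k)f_\nu(\mathbf x_k)\mathbf w^\nu_{k,l}, \] where $\mathbf x_{k,l}=\mathbf x_l-\mathbf x_k$, $\mathbf w_{k,l}=\mathbf w_l-\mathbf w_k$. Then for all $0\le k<l\le N$, \[ \max_{\mu=1,\dots,d}\|J^\mu\|_{p/2;[k,l]}\le 2^{1-2/p}\|f\|_{C^2_b}\Big(\|I\|^{p/2}_{p/2;[k,l]}+\tfrac12\|\mathbf x\|^p_{p;[k,l]}\Big)^{2/p}. \]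
   Context: $\mathbb R^n$ carries a fixed norm and derivatives use operator norms; $\|f\|_{C^2_b}\coloneqq\max_\mu\max_{j=1,2}\|D^jf_\mu\|_\infty$. $\mathcal S_{k,l}$ is the set of increasing integer sequences $s=(s_0=k<\dots<s_{m+1}=l)$, $\#s=m$; for a time series $\|\mathbf x\|_{q;[k,l]}\coloneqq(\max_s\sum_{j=0}^{\#s}|\mathbf x_{s_{j+1}}-\mathbf x_{s_j}|^q)^{1/q}$, and for a triangular array $(\Xi_{k,l})_{k<l}$, $\|\Xi\|_{q;[k,l]}\coloneqq(\max_s\sum_{j=0}^{\#s}|\Xi_{s_j,s_{j+1}}|^q)^{1/q}$. *)

(* R : realType; R^n is 'rV[R]_n. *)
From HB Require Import structures.
From mathcomp Require Import all_boot all_order all_algebra.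
From mathcomp Require Import all_classical all_reals all_analysis.
Set Implicit Arguments. Unset Strict Implicit. Unset Printing Implicit Defensive.
Import Order.TTheory GRing.Theory Num.Theory.
Import numFieldNormedType.Exports.
Local Open Scope classical_set_scope.
Local Open Scope ring_scope.

Definition is_norm (R : realType) (n : nat) (nrm : 'rV[R]_n -> R) : Prop :=
  [/\ forall x, nrm x = 0 -> x = 0,
      forall (a : R) x, nrm (a *: x) = `|a| * nrm x &
      forall x y, nrm (x + y) <= nrm x + nrm y].

Definition D1norm (R : realType) (n : nat) (nrm : 'rV[R]_n -> R)
    (g : 'rV[R]_n -> 'rV[R]_n) : R :=
  sup [set r | exists x v, nrm v <= 1 /\ r = nrm (derive g x v)].

Definition D2norm (R : realType) (n : nat) (nrm : 'rV[R]_n -> R)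
    (g : 'rV[R]_n -> 'rV[R]_n) : R :=
  sup [set r | exists x u v, [/\ nrm u <= 1, nrm v <= 1 &
         r = nrm (derive (fun y => derive g y v) x u)]].

Definition C2b (R : realType) (n : nat) (nrm : 'rV[R]_n -> R)
    (g : 'rV[R]_n -> 'rV[R]_n) : Prop :=
  [/\ forall x, differentiable g x,
      forall v x, differentiable (fun y => derive g y v) x,
      forall u v, continuous (fun x => derive (fun y => derive g y v) x u),
      exists M, forall x v, nrm v <= 1 -> nrm (derive g x v) <= M &
      exists M, forall x u v, nrm u <= 1 -> nrm v <= 1 ->
         nrm (derive (fun y => derive g y v) x u) <= M].

Definition C2b_norm (R : realType) (n d : nat) (nrm : 'rV[R]_n -> R)
    (f : 'I_d -> 'rV[R]_n -> 'rV[R]_n) : R :=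
  \big[Num.max/0]_(mu < d) Num.max (D1norm nrm (f mu)) (D2norm nrm (f mu)).

(* partition s = k :: t with k = s_0 < s_1 < ... < s_{m+1} = l;
   sum_j Xi(s_j, s_{j+1})^q *)
Definition part_sum (R : realType) (q : R) (Xi : nat -> nat -> R)
    (k : nat) (t : seq nat) : R :=
  \sum_(ij <- zip (k :: t) t) (Xi ij.1 ij.2) `^ q.

Definition is_part (k l : nat) (t : seq nat) : Prop :=
  path ltn k t /\ last k t = l.

Definition pvar (R : realType) (q : R) (Xi : nat -> nat -> R) (k l : nat) : R :=
  (sup [set part_sum q Xi k t | t in is_part k l]) `^ q^-1.

Definition euler_sol (R : realType) (n d N : nat)
    (f : 'I_d -> 'rV[R]_n -> 'rV[R]_n) (w : nat -> 'I_d -> R)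
    (xi : 'rV[R]_n) (x : nat -> 'rV[R]_n) : Prop :=
  x 0%N = xi /\
  forall k, (k < N)%N ->
    x k.+1 = x k + \sum_(mu < d) (w k.+1 mu - w k mu) *: f mu (x k).

Definition Iarr (R : realType) (n d : nat)
    (f : 'I_d -> 'rV[R]_n -> 'rV[R]_n) (w : nat -> 'I_d -> R)
    (x : nat -> 'rV[R]_n) (k l : nat) : 'rV[R]_n :=
  x l - x k - \sum_(mu < d) (w l mu - w k mu) *: f mu (x k).

Definition Jarr (R : realType) (n d : nat)
    (f : 'I_d -> 'rV[R]_n -> 'rV[R]_n) (w : nat -> 'I_d -> R)
    (x : nat -> 'rV[R]_n) (mu : 'I_d) (k l : nat) : 'rV[R]_n :=
  f mu (x l) - f mu (x k)
  - \sum_(nu < d) (w l nu - w k nu) *: derive (f mu) (x k) (f nu (x k)).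

From HB Require Import structures.
From mathcomp Require Import all_boot all_order all_algebra.
From mathcomp Require Import all_classical all_reals all_analysis.
From mathcomp Require Import lra ring.
Import Order.TTheory GRing.Theory Num.Theory.
Import numFieldNormedType.Exports.
Local Open Scope classical_set_scope.
Local Open Scope ring_scope.

(* Put h := x_l - x_k.  By linearity of Df_mu(x_k),
     J^mu_{k,l} = [f_mu(x_k + h) - f_mu(x_k) - Df_mu(x_k) h] + Df_mu(x_k) I_{k,l},
   so Taylor's formula gives |J^mu_{k,l}| <= ||f|| (|I_{k,l}| + |h|^2 / 2) for every
   pair k < l, whatever the sequences w and x.  For q = p/2 >= 1, convexity of t^q gives
   |J^mu_{k,l}|^q <= (2^(1-1/q) ||f||)^q (|I_{k,l}|^q + |h|^p / 2), and summing along a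
   partition of [k, l] and taking suprema yields the claim.  Since the norm on R^n is
   arbitrary, the Taylor estimate is obtained from a mean value inequality proved by
   real induction. *)

Set Implicit Arguments. Unset Strict Implicit.

Lemma real_induction (R : realType) (a b : R) (P : R -> Prop) : a <= b -> P a ->
  (forall t, a <= t -> t < b -> P t ->
     exists2 d, 0 < d & forall s, 0 < s -> s < d -> P (t + s)) ->
  (forall t, a < t -> t <= b -> (forall u, a <= u -> u < t -> P u) -> P t) ->
  P b.
Proof.
move=> ab Pa Pstep Plim.
pose S := [set t | t <= b /\ forall u, a <= u -> u <= t -> P u].
have Sa : S a by split=> // u au ua; have -> : u = a by apply/eqP; rewrite eq_le ua.
have supS : has_sup S by split; [exists a | exists b => t []].
pose c := sup S.
have ac : a <= c by exact: sup_upper_bound.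
have cb : c <= b by apply: ge_sup => //; [exists a | move=> t []].
have Pc : forall u, a <= u -> u <= c -> P u.
  move=> u au; rewrite le_eqVlt => /predU1P[->|uc]; last first.
    have [t [_ Pt] ut] := @sup_adherent _ S (c - u) ltac:(lra) supS.
    by apply: Pt => //; rewrite -/c in ut; lra.
  move: ac; rewrite le_eqVlt => /predU1P[<-//|ac]; apply: Plim => // v av vc.
  have [t [_ Pt] vt] := @sup_adherent _ S (c - v) ltac:(lra) supS.
  by apply: Pt => //; rewrite -/c in vt; lra.
suff <- : c = b by apply: Pc.
apply/eqP; rewrite eq_le cb leNgt; apply/negP => cb'.
have [d d0 Pd] := Pstep c ac cb' (Pc c ac (lexx c)).
pose s := Num.min (d / 2) (b - c).
have s0 : 0 < s by rewrite lt_min divr_gt0 //= subr_gt0.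
have sd : s < d by rewrite gt_min; apply/orP; left; lra.
have sbc : s <= b - c by rewrite ge_min lexx orbT.
suff /(sup_upper_bound supS) : S (c + s) by rewrite -/c; lra.
split; first lra.
move=> u au; rewrite le_eqVlt => /predU1P[->|]; first exact: Pd.
move=> ucs; have [uc|cu] := leP u c; first exact: Pc.
have -> : u = c + (u - c) by ring.
by apply: Pd; lra.
Qed.

Section NormOnRowVectors.
Variables (R : realType) (n : nat) (nrm : 'rV[R]_n -> R).
Hypothesis hn : is_norm nrm.

Lemma nrm0_eq0 v : nrm v = 0 -> v = 0. Proof. by case: hn => + _ _; apply. Qed.

Lemma nrmZ a v : nrm (a *: v) = `|a| * nrm v. Proof. by case: hn => _ + _; apply. Qed.

Lemma ler_nrmD u v : nrm (u + v) <= nrm u + nrm v. Proof. by case: hn => _ _; apply. Qed.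

Lemma nrm0 : nrm 0 = 0.
Proof. by rewrite -(scale0r (0 : 'rV[R]_n)) nrmZ normr0 mul0r. Qed.

Lemma nrm_ge0 v : 0 <= nrm v.
Proof.
have := ler_nrmD v (- v); rewrite subrr nrm0 -scaleN1r nrmZ normrN normr1.
lra.
Qed.

Lemma ler_nrmB u v w : nrm (u - w) <= nrm (u - v) + nrm (v - w).
Proof. by rewrite -[u - w](subrKA v) ler_nrmD. Qed.

Lemma ler_nrm_sum (I : Type) (r : seq I) (F : I -> 'rV[R]_n) :
  nrm (\sum_(i <- r) F i) <= \sum_(i <- r) nrm (F i).
Proof.
elim: r => [|i r IHr]; first by rewrite !big_nil nrm0.
by rewrite !big_cons (le_trans (ler_nrmD _ _)) ?lerD2l.
Qed.

Lemma nrm_polar v : exists2 u, nrm u <= 1 & v = nrm v *: u.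
Proof.
have [v0|v0] := eqVneq (nrm v) 0.
  by exists 0; rewrite ?nrm0 // scaler0 (nrm0_eq0 v0).
exists ((nrm v)^-1 *: v); last by rewrite scalerA mulfV // scale1r.
by rewrite nrmZ ger0_norm ?invr_ge0 ?nrm_ge0 // mulVf.
Qed.

Lemma nrm_le_mx_norm : exists2 K, 0 <= K & forall v, nrm v <= K * `|v|.
Proof.
exists (\sum_(j < n) nrm 'e_j) => [|v]; first by rewrite sumr_ge0 // => j _; apply: nrm_ge0.
rewrite {1}(row_sum_delta v) mulr_suml (le_trans (ler_nrm_sum _ _)) //.
apply: ler_sum => j _; rewrite nrmZ mulrC ler_wpM2l ?nrm_ge0 //.
by rewrite /Num.norm /= mx_normrE (le_bigmax _ (fun ij : 'I_1 * 'I_n => `|v ij.1 ij.2|) (0, j)).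
Qed.

Lemma nrm_le_of_normr_small e : 0 < e -> exists2 d, 0 < d & forall v, `|v| <= d -> nrm v <= e.
Proof.
move=> e0; have [K K0 nrmK] := nrm_le_mx_norm.
exists (e / (K + 1)) => [|v vd]; first by rewrite divr_gt0 //; lra.
apply: le_trans (nrmK v) (le_trans (ler_wpM2l K0 vd) _).
by rewrite mulrA ler_pdivrMr ?mulrDr ?mulr1 ?[K * e]mulrC ?lerDl; lra.
Qed.
Lemma continuous_nrm_dist (G : R -> 'rV[R]_n) t : {for t, continuous G} ->
  forall e, 0 < e -> exists2 d, 0 < d & forall s, `|t - s| < d -> nrm (G t - G s) <= e.
Proof.
move=> /cvgrPdist_le Gt e e0; have [d' d'0 small] := nrm_le_of_normr_small e0.
have /nbhs_ballP[d d0 near_t] := Gt d' d'0.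
by exists d => // s ts; apply/small/near_t.
Qed.

Lemma nrm_line_remainder (F : 'rV[R]_n -> 'rV[R]_n) x0 h u :
  differentiable F (x0 + u *: h) -> forall e, 0 < e -> exists2 d, 0 < d &
  forall s, 0 < s -> s < d ->
  nrm (F (x0 + (u + s) *: h) - F (x0 + u *: h) - s *: derive F (x0 + u *: h) h) <= e * s.
Proof.
move=> /(diff_derivable (v := h))/cvgrPdist_le dF e e0.
have [d' d'0 small] := nrm_le_of_normr_small e0.
have [d /= d0 near0] := dF d' d'0.
exists d => // s s0 sd; set z := x0 + u *: h.
have -> : F (x0 + (u + s) *: h) - F z - s *: derive F z h =
    s *: (s^-1 *: (F (s *: h + z) - F z) - derive F z h).
  by rewrite scalerBr scalerA mulfV ?gt_eqF // scale1r scalerDl [s *: h + z]addrC /z addrA.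
rewrite nrmZ gtr0_norm // mulrC ler_pM2r // small // -normrN opprB.
by rewrite near0 //= ?sub0r ?normrN ?gtr0_norm ?gt_eqF.
Qed.

Lemma continuous_line (F : 'rV[R]_n -> 'rV[R]_n) x0 h :
  (forall x, differentiable F x) -> continuous (fun t : R => F (x0 + t *: h)).
Proof.
move=> dF t; apply: (continuous_comp (f := fun t : R => x0 + t *: h)).
  by apply: cvgD; [exact: cvg_cst | apply: cvgZ; [exact: cvg_id | exact: cvg_cst]].
exact/differentiable_continuous/dF.
Qed.

Lemma mean_value_ineq (G D : R -> 'rV[R]_n) (beta : R -> R) (a b : R) :
  a <= b -> continuous G ->
  (forall t, a <= t -> t < b -> forall e, 0 < e -> exists2 d, 0 < d &
     forall s, 0 < s -> s < d -> nrm (G (t + s) - G t - s *: D t) <= e * s) ->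
  (forall t, a <= t -> t < b -> forall s, 0 < s ->
     nrm (D t) * s <= beta (t + s) - beta t) ->
  nrm (G b - G a) <= beta b - beta a.
Proof.
move=> ab Gc dG dbeta; apply/ler_addgt0Pr => e e0.
pose eps := e / (b - a + 1).
have eps0 : 0 < eps by rewrite divr_gt0 //; lra.
have beta_nondecr t u : a <= t -> t <= u -> u <= b -> beta t <= beta u.
  move=> at1; rewrite le_eqVlt => /predU1P[-> //|tu ub].
  have := dbeta t at1 (lt_le_trans tu ub) (u - t) ltac:(lra).
  rewrite subrKC; have := nrm_ge0 (D t); nra.
(* The slack eps (t - a) absorbs the o(s) error of each forward step. *)
pose P t := nrm (G t - G a) <= beta t - beta a + eps * (t - a).
suff Pb : P b by apply: le_trans Pb _; rewrite lerD2l /eps mulrAC ler_pdivrMr ?ler_pM2l //; lra.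
apply: (real_induction (P := P) ab); first by rewrite /P !subrr nrm0 mulr0 addr0.
- move=> t at1 tb Pt; have [d d0 remt] := dG t at1 tb eps eps0.
  exists d => // s s0 sd; rewrite /P.
  have := ler_nrmD (G (t + s) - G t - s *: D t) (s *: D t).
  rewrite subrK nrmZ gtr0_norm // => Gts.
  have := ler_nrmB (G (t + s)) (G t) (G a).
  have := remt s s0 sd; have := dbeta t at1 tb s s0; move: Pt; rewrite /P; nra.
- move=> t at1 tb Pbefore; apply/ler_addgt0Pr => e' e'0.
  have [d d0 Gnear] := continuous_nrm_dist (Gc t) e'0.
  pose u := Num.max a (t - d / 2).
  have au : a <= u by rewrite le_max lexx.
  have ut : u < t by rewrite gt_max at1 /=; lra.
  have tud : `|t - u| < d.
    by rewrite ger0_norm ?subr_ge0 ?ltW // ltrBlDl -ltrBlDr lt_max; apply/orP; right; lra.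
  have := Gnear u tud; have := Pbefore u au ut; have := beta_nondecr u t au (ltW ut) tb.
  have := ler_nrmB (G t) (G u) (G a); rewrite /P; nra.
Qed.

Section DerivativeBounds.
Variable g : 'rV[R]_n -> 'rV[R]_n.
Hypothesis gC2 : C2b nrm g.

Lemma D1norm_ub z u : nrm u <= 1 -> nrm (derive g z u) <= D1norm nrm g.
Proof.
case: gC2 => _ _ _ [M gM] _ u1; apply: sup_upper_bound; last by exists z, u.
split; first by exists (nrm (derive g 0 0)), 0, 0; rewrite nrm0.
by exists M => _ [y [v [v1 ->]]]; apply: gM.
Qed.

Lemma D2norm_ub z u v : nrm u <= 1 -> nrm v <= 1 ->
  nrm (derive (fun y => derive g y v) z u) <= D2norm nrm g.
Proof.
case: gC2 => _ _ _ _ [M gM] u1 v1; apply: sup_upper_bound; last by exists z, u, v.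
split; first by exists (nrm (derive (fun y => derive g y 0) 0 0)), 0, 0, 0; rewrite nrm0.
by exists M => _ [y [u' [v' [u'1 v'1 ->]]]]; apply: gM.
Qed.

Lemma D1norm_ge0 : 0 <= D1norm nrm g.
Proof. by rewrite (le_trans (nrm_ge0 (derive g 0 0))) // D1norm_ub ?nrm0. Qed.

Lemma nrm_derive_le z v : nrm (derive g z v) <= D1norm nrm g * nrm v.
Proof.
case: gC2 => dg _ _ _ _; have [u u1 v_eq] := nrm_polar v; rewrite {1}v_eq.
rewrite deriveE // linearZ /= -deriveE // nrmZ ger0_norm ?nrm_ge0 //.
by rewrite mulrC ler_wpM2r ?nrm_ge0 ?D1norm_ub.
Qed.

Lemma nrm_derive2_le z v :
  nrm (derive (fun y => derive g y v) z v) <= D2norm nrm g * nrm v ^+ 2.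
Proof.
case: gC2 => dg ddg _ _ _; have [u u1 v_eq] := nrm_polar v.
rewrite {1 2}v_eq; set a := nrm v.
have -> : (fun y => derive g y (a *: u)) = a \*: (fun y => derive g y u).
  by apply: funext => y /=; rewrite deriveE // linearZ /= -deriveE.
rewrite deriveZ; last exact: diff_derivable.
rewrite (deriveE _ (ddg u z)) linearZ /= -(deriveE _ (ddg u z)).
rewrite scalerA nrmZ ger0_norm ?mulr_ge0 ?nrm_ge0 // mulrC expr2.
by rewrite ler_wpM2r ?mulr_ge0 ?nrm_ge0 ?D2norm_ub.
Qed.

Lemma nrm_derive_increment_le x0 h t : 0 <= t ->
  nrm (derive g (x0 + t *: h) h - derive g x0 h) <= D2norm nrm g * nrm h ^+ 2 * t.
Proof.
case: gC2 => _ ddg _ _ _ t0; set M := D2norm nrm g * nrm h ^+ 2.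
have := @mean_value_ineq (fun t => derive g (x0 + t *: h) h)
  (fun t => derive (fun y => derive g y h) (x0 + t *: h) h) (fun t => M * t) 0 t t0.
rewrite scale0r addr0 mulr0 subr0; apply.
- exact: (continuous_line (F := fun y => derive g y h) (ddg h)).
- by move=> u _ _; apply: nrm_line_remainder.
- move=> u _ _ s s0; rewrite mulrDr addrAC subrr add0r.
  by apply: ler_wpM2r; [exact: ltW | exact: nrm_derive2_le].
Qed.

Lemma nrm_taylor2_le x0 h :
  nrm (g (x0 + h) - g x0 - derive g x0 h) <= 2^-1 * (D2norm nrm g * nrm h ^+ 2).
Proof.
case: gC2 => dg _ _ _ _; set M := D2norm nrm g * nrm h ^+ 2.
have M0 : 0 <= M by rewrite (le_trans (nrm_ge0 _) (nrm_derive2_le x0 h)).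
pose G t := g (x0 + t *: h) - t *: derive g x0 h.
have := @mean_value_ineq G (fun t => derive g (x0 + t *: h) h - derive g x0 h)
  (fun t => 2^-1 * M * (t * t)) 0 1 ler01.
rewrite /G !scale1r !scale0r !addr0 subr0 addrAC !mulr1 !mulr0 subr0; apply.
- move=> t; apply: cvgB; first exact: (continuous_line (F := g) dg).
  by apply: cvgZ; [exact: cvg_id | exact: cvg_cst].
- move=> u _ _ e e0; have [d d0 rem] := nrm_line_remainder (dg (x0 + u *: h)) e0.
  exists d => // s s0 sd.
  have shift (A B P c : 'rV[R]_n) :
      A - (u + s) *: c - (B - u *: c) - s *: (P - c) = A - B - s *: P.
    by apply/rowP => i; rewrite !mxE; ring.
  by rewrite /G shift rem.
- move=> u u0 _ s s0; apply: le_trans (_ : M * u * s <= _).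
    by apply: ler_wpM2r; [exact: ltW | exact: nrm_derive_increment_le].
  rewrite -subr_ge0 (_ : _ - _ - _ = 2^-1 * M * (s * s)); last by field.
  by apply: mulr_ge0; [apply: mulr_ge0; rewrite ?invr_ge0 | apply: mulr_ge0; apply: ltW].
Qed.

End DerivativeBounds.

End NormOnRowVectors.

Lemma powRD_le (R : realType) (q a b : R) : 1 <= q -> 0 <= a -> 0 <= b ->
  (a + b) `^ q <= 2 `^ (q - 1) * (a `^ q + b `^ q).
Proof.
move=> q1 a0 b0.
have mid_convex : (2^-1 * a + 2^-1 * b) `^ q <= 2^-1 * a `^ q + 2^-1 * b `^ q.
  rewrite {2 4}(_ : 2^-1 = 1 - 2^-1); last by rewrite {2}(splitr 1) div1r addrK.
  by apply: (convex_powR q1 (Itv01 _ _)) => //=;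
    rewrite ?inE/= ?in_itv/= ?a0 ?b0 // ?invr_ge0// invf_le1 ?ler1n.
have -> : a + b = 2 * (2^-1 * a + 2^-1 * b) by field.
rewrite powRM ?addr_ge0 ?mulr_ge0 ?invr_ge0 ?ler0n //.
rewrite powRD ?pnatr_eq0 ?implybT // powR_inv1 ?ler0n // -mulrA ler_wpM2l ?powR_ge0 //.
by rewrite mulrDr.
Qed.

Lemma powR_add_half_sq_le (R : realType) (q a b : R) : 1 <= q -> 0 <= a -> 0 <= b ->
  (a + 2^-1 * b ^+ 2) `^ q <= 2 `^ (q - 1) * (a `^ q + 2^-1 * b `^ (2 * q)).
Proof.
move=> q1 a0 b0; have h0 : (0 : R) <= 2^-1 by rewrite invr_ge0.
apply: le_trans (powRD_le q1 a0 (mulr_ge0 h0 (exprn_ge0 2 b0))) _.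
rewrite ler_wpM2l ?powR_ge0 // lerD2l powRM ?exprn_ge0 //.
rewrite powRrM powR_mulrn // ler_wpM2r ?powR_ge0 //.
by rewrite ge1r_powR // invr_gt0 ltr0n /= invf_le1 ?ler1n.
Qed.

Section EulerRemainders.
Variables (R : realType) (n d : nat) (nrm : 'rV[R]_n -> R).
Variables (f : 'I_d -> 'rV[R]_n -> 'rV[R]_n) (w : nat -> 'I_d -> R) (x : nat -> 'rV[R]_n).
Hypotheses (hn : is_norm nrm) (fC2 : forall mu, C2b nrm (f mu)).

Lemma D1norm_le_C2b_norm mu : D1norm nrm (f mu) <= C2b_norm nrm f.
Proof. by apply: le_trans (le_bigmax _ _ mu); rewrite le_max lexx. Qed.

Lemma D2norm_le_C2b_norm mu : D2norm nrm (f mu) <= C2b_norm nrm f.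
Proof. by apply: le_trans (le_bigmax _ _ mu); rewrite le_max lexx orbT. Qed.

Lemma C2b_norm_ge0 : 0 <= C2b_norm nrm f.
Proof.
apply: (big_ind (fun v => 0 <= v)) => // [u v u0 _ | mu _]; first by rewrite le_max u0.
by rewrite le_max (D1norm_ge0 hn (fC2 mu)).
Qed.

Lemma JarrE mu a b : Jarr f w x mu a b =
  (f mu (x a + (x b - x a)) - f mu (x a) - derive (f mu) (x a) (x b - x a))
  + derive (f mu) (x a) (Iarr f w x a b).
Proof.
have [df _ _ _ _] := fC2 mu.
rewrite /Jarr /Iarr [x a + _]addrC subrK !(deriveE _ (df _)).
rewrite [X in _ = _ + X]linearB addrA subrK; congr (_ - _).
rewrite linear_sum; apply: eq_bigr => nu _.
by rewrite linearZ deriveE.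
Qed.

Lemma nrm_Jarr_le mu a b : nrm (Jarr f w x mu a b) <=
  C2b_norm nrm f * (nrm (Iarr f w x a b) + 2^-1 * nrm (x b - x a) ^+ 2).
Proof.
rewrite JarrE mulrDr [X in _ <= X]addrC; apply: le_trans (ler_nrmD hn _ _) _; apply: lerD.
- apply: le_trans (nrm_taylor2_le hn (fC2 mu) _ _) _.
  rewrite mulrCA; apply: ler_wpM2r; last exact: D2norm_le_C2b_norm.
  by rewrite mulr_ge0 ?invr_ge0 ?exprn_ge0 ?nrm_ge0.
- apply: le_trans (nrm_derive_le hn (fC2 mu) _ _) _.
  by apply: ler_wpM2r; [exact: nrm_ge0 | exact: D1norm_le_C2b_norm].
Qed.

Lemma nrm_Jarr_powR_le (p : R) mu a b : 2 <= p ->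
  nrm (Jarr f w x mu a b) `^ (p / 2) <= (2 `^ (1 - 2 / p) * C2b_norm nrm f) `^ (p / 2) *
    (nrm (Iarr f w x a b) `^ (p / 2) + 2^-1 * nrm (x b - x a) `^ p).
Proof.
move=> p2; set q := p / 2; set C := C2b_norm nrm f.
have q1 : 1 <= q by rewrite /q ler_pdivlMr //; lra.
have C0 : 0 <= C := C2b_norm_ge0.
have [I0 h0] := (nrm_ge0 hn (Iarr f w x a b), nrm_ge0 hn (x b - x a)).
have half_h0 : 0 <= 2^-1 * nrm (x b - x a) ^+ 2 by rewrite mulr_ge0 ?invr_ge0 ?exprn_ge0.
apply: le_trans (ge0_ler_powR (r := q) _ _ _ (nrm_Jarr_le mu a b)) _.
- lra.
- by rewrite nnegrE nrm_ge0.
- by rewrite nnegrE mulr_ge0 ?addr_ge0.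
rewrite powRM ?addr_ge0 // powRM ?powR_ge0 // -powRrM.
rewrite (_ : (1 - 2 / p) * q = q - 1); last by rewrite /q; field; lra.
rewrite -/C [2 `^ _ * _]mulrC -mulrA ler_wpM2l ?powR_ge0 //.
have -> : p = 2 * q by rewrite /q; field.
exact: powR_add_half_sq_le.
Qed.

End EulerRemainders.

Section PVariation.
Variable R : realType.
Implicit Types (q : R) (Xi : nat -> nat -> R).

Local Notation part_sums q Xi k l := [set part_sum q Xi k t | t in is_part k l].
Local Notation max_powR q Xi l :=
  (\big[Num.max/0]_(i < l.+1) \big[Num.max/0]_(j < l.+1) Xi i j `^ q).

Lemma part_sum_ge0 q Xi k t : 0 <= part_sum q Xi k t.
Proof. by rewrite sumr_ge0 // => ij _; apply: powR_ge0. Qed.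

Lemma powR_le_bigmax2 q Xi l a b : (a <= l)%N -> (b <= l)%N ->
  Xi a b `^ q <= max_powR q Xi l.
Proof.
move=> al bl; pose a' := @Ordinal l.+1 a al; pose b' := @Ordinal l.+1 b bl.
apply: le_trans (le_bigmax _ (fun j : 'I_l.+1 => Xi a' j `^ q) b') _.
exact: (le_bigmax _ (fun i : 'I_l.+1 => \big[Num.max/0]_(j < l.+1) Xi i j `^ q) a').
Qed.

Lemma path_ltn_size_le k t : path ltn k t -> (k + size t <= last k t)%N.
Proof.
elim: t k => [|j t IHt] k /=; first by rewrite addn0.
by move=> /andP[kj /IHt]; apply: leq_trans; rewrite addnS ltn_add2r.
Qed.

Lemma part_sum_le_size q Xi l t k : path ltn k t -> (last k t <= l)%N ->
  part_sum q Xi k t <= (size t)%:R * max_powR q Xi l.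
Proof.
elim: t k => [|j t IHt] k /=; first by rewrite /part_sum big_nil mul0r.
move=> /andP[kj jt] tl; have size_jt := path_ltn_size_le jt.
rewrite /part_sum /= big_cons -/(part_sum q Xi j t) -addn1 natrD mulrDl mul1r.
rewrite addrC lerD ?IHt //; apply: powR_le_bigmax2; apply: leq_trans tl.
  exact: leq_trans (ltnW kj) (leq_trans (leq_addr _ _) size_jt).
exact: leq_trans (leq_addr _ _) size_jt.
Qed.

Variables k l : nat.
Hypothesis kl : (k < l)%N.

Lemma is_part_single : is_part k l [:: l].
Proof. by split=> //=; rewrite kl. Qed.

Lemma has_sup_part_sums q Xi : has_sup (part_sums q Xi k l).
Proof.
split; first by exists (part_sum q Xi k [:: l]), [:: l]; first exact: is_part_single.
exists (l%:R * max_powR q Xi l) => _ [t [kt tl] <-].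
have tl' : (last k t <= l)%N by rewrite tl.
apply: le_trans (part_sum_le_size q Xi kt tl') _.
apply: ler_wpM2r; last by rewrite ler_nat -tl (leq_trans (leq_addl k _) (path_ltn_size_le kt)).
by apply: le_trans (powR_ge0 (Xi 0%N 0%N) q) (powR_le_bigmax2 _ _ _ _).
Qed.

Lemma part_sum_le_sup q Xi t : is_part k l t -> part_sum q Xi k t <= sup (part_sums q Xi k l).
Proof. by move=> klt; apply: sup_upper_bound; [exact: has_sup_part_sums | exists t]. Qed.

Lemma sup_part_sums_ge0 q Xi : 0 <= sup (part_sums q Xi k l).
Proof. exact: le_trans (part_sum_ge0 q Xi k [:: l]) (part_sum_le_sup q Xi is_part_single). Qed.

Lemma pvar_powR q Xi : q != 0 -> pvar q Xi k l `^ q = sup (part_sums q Xi k l).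
Proof. by move=> q0; rewrite /pvar -powRrM mulVf // powRr1 // sup_part_sums_ge0. Qed.

Lemma pvar_le_of_termwise q q' (A c : R) (XJ XI XX : nat -> nat -> R) :
  0 < q -> q' != 0 -> 0 <= A -> 0 <= c ->
  (forall a b, XJ a b `^ q <= A `^ q * (XI a b `^ q + c * XX a b `^ q')) ->
  pvar q XJ k l <= A * (pvar q XI k l `^ q + c * pvar q' XX k l `^ q') `^ q^-1.
Proof.
move=> q0 q'0 A0 c0 termwise.
move: (pvar_powR XI (lt0r_neq0 q0)) (pvar_powR XX q'0).
move: (pvar q XI k l) (pvar q' XX k l) => PI PX -> ->; set B := _ + _.
have B0 : 0 <= B by rewrite addr_ge0 ?mulr_ge0 ?sup_part_sums_ge0.
have sup_le : sup (part_sums q XJ k l) <= A `^ q * B.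
  apply: ge_sup => [|_ [t klt <-]].
    by exists (part_sum q XJ k [:: l]), [:: l]; first exact: is_part_single.
  apply: le_trans (ler_sum _ (fun ij _ => termwise ij.1 ij.2)) _.
  rewrite -mulr_sumr big_split -mulr_sumr /=.
  apply: ler_wpM2l; first exact: powR_ge0.
  apply: lerD; first exact: part_sum_le_sup.
  by apply: ler_wpM2l => //; apply: part_sum_le_sup.
apply: le_trans (ge0_ler_powR (r := q^-1) _ _ _ sup_le) _.
- by rewrite invr_ge0 ltW.
- by rewrite nnegrE sup_part_sums_ge0.
- by rewrite nnegrE mulr_ge0 ?powR_ge0.
by rewrite powRM ?powR_ge0 // -powRrM mulfV ?gt_eqF // powRr1.
Qed.

End PVariation.

Unset Implicit Arguments. Set Strict Implicit.

Theorem lemma5p7 (R : realType) (p : R) (N d n : nat)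
  (nrm : 'rV[R]_n -> R) (f : 'I_d -> 'rV[R]_n -> 'rV[R]_n)
  (w : nat -> 'I_d -> R) (xi : 'rV[R]_n) (x : nat -> 'rV[R]_n) :
  2 <= p -> p < 3 -> (1 <= d)%N -> (1 <= n)%N ->
  is_norm nrm ->
  (forall mu, C2b nrm (f mu)) ->
  euler_sol N f w xi x ->
  forall k l : nat, (k < l)%N -> (l <= N)%N ->
  \big[Num.max/0]_(mu < d) pvar (p / 2) (fun a b => nrm (Jarr f w x mu a b)) k l
  <= 2 `^ (1 - 2 / p) * C2b_norm nrm f *
     ((pvar (p / 2) (fun a b => nrm (Iarr f w x a b)) k l) `^ (p / 2)
      + 2^-1 * (pvar p (fun a b => nrm (x b - x a)) k l) `^ p) `^ (2 / p).
Proof.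
move=> p2 _ _ _ hn fC2 _ k l kl _.
have A0 : 0 <= 2 `^ (1 - 2 / p) * C2b_norm nrm f.
  by rewrite mulr_ge0 ?powR_ge0 ?(C2b_norm_ge0 hn fC2).
rewrite [in X in _ <= _ * X](_ : 2 / p = (p / 2)^-1); last by rewrite invf_div.
apply: bigmax_le => [|mu _]; first by rewrite mulr_ge0 ?powR_ge0.
have q0 : 0 < p / 2 by rewrite divr_gt0 //; lra.
have p0 : p != 0 by rewrite gt_eqF //; lra.
apply: (pvar_le_of_termwise kl q0 p0 A0); first by rewrite invr_ge0.
by move=> a b; apply: nrm_Jarr_powR_le.
Qed.
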